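(* Let $T$ be a tree and let $u$ be a support vertex of $T$ such that $|N(u)\setminus L_u|=1$. Let $T'=T-(L_u\cup\{u\})$. Then $\gamma^{DLD}(T')=\gamma^{DLD}(T)-|L_u|$.
   Context: For a vertex $u$, $N(u)$ is its set of neighbours and $N[u]=N(u)\cup\{u\}$. A code in a graph with vertex set $V$ is a non-empty subset $C\subseteq V$; $I(C;u)=N[u]\cap C$. A code $C$ is solid-locating-dominating if $I(C;u)\ne\emptyset$ for every $u\in V\setminus C$ and $I(C;u)\not\subseteq I(C;v)$ for all distinct $u,v\in V\setminus C$; $\gamma^{DLD}$ denotes the minimum size of such a code. A leaf is a vertex of degree one; a support vertex is a vertex adjacent to at least one leaf; for a support vertex $u$, $L_u$ is the set of leaves adjacent to $u$. $T-X$ denotes the subgraph induced by $V(T)\setminus X$. *)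

(* A (simple) graph is given by a symmetric irreflexive
   relation e on a finite type T together with a vertex set V : {set T};
   the graph is the subgraph of e induced by V.  This lets us speak of
   induced subgraphs T - X as (e, V :\: X). *)
From mathcomp Require Import all_boot.
Set Implicit Arguments. Unset Strict Implicit. Unset Printing Implicit Defensive.

Section Graphs.
Variable T : finType.
Variable e : rel T.

Definition nbhd (V : {set T}) (u : T) : {set T} := [set v in V | e u v].
Definition cnbhd (V : {set T}) (u : T) : {set T} := u |: nbhd V u.
Definition Icode (V : {set T}) (C : {set T}) (u : T) : {set T} :=
  cnbhd V u :&: C.

Definition is_DLD (V C : {set T}) : bool :=
  [&& C != set0, C \subset V,
      [forall u in V :\: C, Icode V C u != set0] &
      [forall u in V :\: C, forall v in V :\: C,
          (u != v) ==> ~~ (Icode V C u \subset Icode V C v)]].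

(* gamma^DLD : minimum size of a solid-locating-dominating code
   (default #|T|.+1 if there is none, which never happens for a non-empty V) *)
Definition gammaDLD (V : {set T}) : nat :=
  \big[minn/#|T|.+1]_(C : {set T} | is_DLD V C) #|C|.

Definition is_leaf (V : {set T}) (x : T) : bool :=
  (x \in V) && (#|nbhd V x| == 1).

Definition leaves_at (V : {set T}) (u : T) : {set T} :=
  [set x in nbhd V u | is_leaf V x].

Definition is_support (V : {set T}) (u : T) : bool :=
  (u \in V) && (leaves_at V u != set0).

Definition connected_on (V : {set T}) : Prop :=
  forall x y, x \in V -> y \in V ->
    exists p : seq T, [&& path e x p, all (fun z => z \in V) p & last x p == y].

Definition has_cycle (V : {set T}) : Prop :=
  exists (x : T) (p : seq T),
    [&& 2 <= size p, uniq (x :: p), all (fun z => z \in V) (x :: p),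
        path e x p & e (last x p) x].

Definition is_tree (V : {set T}) : Prop :=
  V != set0 /\ connected_on V /\ ~ has_cycle V.

End Graphs.

From mathcomp Require Import all_boot order zify.
Import Order.TTheory.
Set Implicit Arguments. Unset Strict Implicit. Unset Printing Implicit Defensive.

(* Let L be the set of leaves at u, w the other neighbour of u and
   W := V - (L + u).  A code C of V misses at most one leaf, and a missing leaf
   forces u and w into C; so C meets L + u in at least |L| vertices, and in
   |L| + 1 when u is in C but w is not.  Adding w to C in that case and
   restricting to W gives a code of W of size at most |C| - |L|: w is the only
   vertex of W adjacent to u, so once u in C implies w in C, no non-codeword of
   W sees a codeword outside W.  Conversely, a code C' of W extends to a code
   of V by adding L when w is not in C' (u, the only new non-codeword, sees L),
   or by adding u and all leaves but one when w is in C' (the missing leaf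
   sees only u). *)

Section SolidLocatingDominating.
Variables (T : finType) (e : rel T).
Implicit Types (V W C D : {set T}) (v x : T).

Lemma IcodeE V C v x :
  (x \in Icode e V C v) = ((x == v) || (x \in V) && e v x) && (x \in C).
Proof. by rewrite /Icode /cnbhd /nbhd !inE. Qed.

Lemma Icode_sub V C v : Icode e V C v \subset C.
Proof. exact: subsetIr. Qed.

Lemma is_DLDP V C : is_DLD e V C <->
  [/\ C != set0, C \subset V,
   {in V, forall v, v \notin C -> Icode e V C v != set0} &
   {in V &, forall a b, a \notin C -> b \notin C -> a != b ->
      ~~ (Icode e V C a \subset Icode e V C b)}].
Proof.
split=> [/and4P[C0 CV /forall_inP dom /forall_inP sep] | [C0 CV dom sep]].
  split=> // [v vV vC | a b aV bV aC bC ab]; first by apply: dom; rewrite inE vC.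
  have /forall_inP/(_ b) := sep a (introT setDP (conj aV aC)).
  by rewrite inE bC bV => /(_ isT)/implyP; apply.
apply/and4P; split=> //.
  by apply/forall_inP => v /setDP[vV vC]; apply: dom.
apply/forall_inP => a /setDP[aV aC]; apply/forall_inP => b /setDP[bV bC].
by apply/implyP; apply: sep.
Qed.

Lemma is_DLD_self V : V != set0 -> is_DLD e V V.
Proof. by move=> V0; apply/is_DLDP; split=> // [v -> | a b ->]. Qed.

Lemma is_DLD_setU1 V C x : is_DLD e V C -> x \in V -> is_DLD e V (x |: C).
Proof.
move=> /is_DLDP[_ CV dom sep] xV; apply/is_DLDP; split.
- by apply/set0Pn; exists x; rewrite setU11.
- by rewrite subUset sub1set xV.
- move=> v vV; rewrite in_setU1 negb_or => /andP[_ vC].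
  have /set0Pn[y yv] := dom v vV vC; apply/set0Pn; exists y.
  by move: yv; rewrite !IcodeE in_setU1 => /andP[-> ->]; rewrite orbT.
- move=> a b aV bV; rewrite !in_setU1 !negb_or => /andP[_ aC] /andP[_ bC] ab.
  apply: contra (sep a b aV bV aC bC ab) => /subsetP sub.
  apply/subsetP => y ya; have := sub y.
  move: ya; rewrite !IcodeE !in_setU1 => /andP[-> yC].
  by rewrite yC orbT => /(_ isT)/andP[->].
Qed.

Lemma gammaDLD_le V C : is_DLD e V C -> gammaDLD e V <= #|C|.
Proof. by move=> VC; rewrite /gammaDLD -minEnat -leEnat; apply: bigmin_le_cond. Qed.

Lemma gammaDLD_witness V : V != set0 ->
  exists2 C, is_DLD e V C & gammaDLD e V = #|C|.
Proof.
move=> /is_DLD_self VV; rewrite /gammaDLD -minEnat (bigmin_eq_arg _ _ _ _ VV).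
  by case: arg_minP => // C VC _; exists C.
by move=> C _; rewrite leEnat ltnW // ltnS max_card.
Qed.

Lemma gammaDLD_shift V W k : V != set0 -> W != set0 ->
  (forall C, is_DLD e V C -> exists2 D, is_DLD e W D & #|D| + k <= #|C|) ->
  (forall D, is_DLD e W D -> exists2 C, is_DLD e V C & #|C| <= #|D| + k) ->
  gammaDLD e W + k = gammaDLD e V.
Proof.
move=> V0 W0 shrink grow; apply/eqP; rewrite eqn_leq; apply/andP; split.
  have [C VC ->] := gammaDLD_witness V0; have [D WD le_DC] := shrink C VC.
  exact: leq_trans (leq_add (gammaDLD_le WD) (leqnn k)) le_DC.
have [D WD ->] := gammaDLD_witness W0; have [C VC le_CD] := grow D WD.
exact: leq_trans (gammaDLD_le VC) le_CD.
Qed.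

Lemma is_DLD_restrict V W C : W \subset V -> W != set0 -> is_DLD e V C ->
  {in W, forall v, v \notin C -> Icode e V C v = Icode e W (C :&: W) v} ->
  is_DLD e W (C :&: W).
Proof.
move=> /subsetP WV /set0Pn[w0 w0W] /is_DLDP[_ _ dom sep] IcodeW.
have notinCW v : v \in W -> v \notin C :&: W -> v \notin C.
  by move=> vW; rewrite inE vW andbT.
apply/is_DLDP; split.
- case: (boolP (w0 \in C)) => w0C; first by apply/set0Pn; exists w0; rewrite inE w0C.
  apply: contraNneq (dom w0 (WV _ w0W) w0C) => CW0.
  by rewrite IcodeW // -subset0 -CW0 Icode_sub.
- exact: subsetIr.
- move=> v vW /(notinCW _ vW) vC; rewrite -IcodeW //.
  exact: dom (WV _ vW) vC.
- move=> a b aW bW /(notinCW _ aW) aC /(notinCW _ bW) bC ab.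
  by rewrite -!IcodeW //; apply: sep; rewrite ?WV.
Qed.

Lemma is_DLD_extend V W C' C z : is_DLD e W C' -> C' \subset C ->
  C \subset V -> {subset V :\: C <= z |: (W :\: C')} ->
  {in W, forall v, v \notin C' -> Icode e V C v = Icode e W C' v} ->
  Icode e V C z != set0 ->
  {in W, forall v, v \notin C' ->
     ~~ (Icode e V C z \subset Icode e W C' v) &&
     ~~ (Icode e W C' v \subset Icode e V C z)} ->
  is_DLD e V C.
Proof.
move=> /is_DLDP[C'0 _ dom sep] C'C CV newV IcodeV z0 zsep.
have nonC v : v \in V -> v \notin C -> v = z \/ v \in W /\ v \notin C'.
  move=> vV vC; have /setU1P[-> | /setDP[vW vC']] : v \in z |: (W :\: C').
  - by apply: newV; rewrite inE vC.
  - by left.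
  - by right.
apply/is_DLDP; split=> //.
- by apply: contraNneq C'0 => C0; rewrite -subset0 -C0.
- move=> v vV vC; have [-> // | [vW vC']] := nonC v vV vC.
  by rewrite IcodeV //; apply: dom.
- move=> a b aV bV aC bC ab.
  have [az | [aW aC']] := nonC a aV aC; have [bz | [bW bC']] := nonC b bV bC.
  + by rewrite az bz eqxx in ab.
  + by rewrite az (IcodeV b) //; case/andP: (zsep b bW bC').
  + by rewrite bz (IcodeV a) //; case/andP: (zsep a aW aC').
  + by rewrite !IcodeV //; apply: sep.
Qed.

End SolidLocatingDominating.

Section PendantLeaves.
Variables (T : finType) (e : rel T).
Hypotheses (e_sym : symmetric e) (e_irr : irreflexive e).
Variables (V L : {set T}) (u w : T).
Hypotheses (uV : u \in V) (LV : L \subset V).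
Hypothesis nbhd_L : {in L, forall l, nbhd e V l = [set u]}.
Hypothesis nbhd_u : nbhd e V u :\: L = [set w].
Implicit Types (C D X : {set T}) (v x z : T).

Let W := V :\: (u |: L).

Lemma pendant_adj l : l \in L -> e u l.
Proof.
by move=> lL; have := set11 u; rewrite -(nbhd_L lL) inE e_sym => /andP[].
Qed.

Lemma u_notin_pendant : u \notin L.
Proof. by apply/negP => /pendant_adj; rewrite e_irr. Qed.

Lemma w_nbhd : [/\ w \in V, e u w & w \notin L].
Proof. by have := set11 w; rewrite -nbhd_u !inE => /and3P[-> -> ->]. Qed.

Lemma memW v : (v \in W) = [&& v \in V, v != u & v \notin L].
Proof. by rewrite !inE negb_or andbC andbA. Qed.

Lemma w_in_W : w \in W.
Proof.
case: w_nbhd => wV uw wL; rewrite memW wV wL andbT.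
by apply: contraTneq uw => ->; rewrite e_irr.
Qed.

Lemma u_notin_W : u \notin W.
Proof. by rewrite memW eqxx andbF. Qed.

Lemma pendant_notin_W l : l \in L -> l \notin W.
Proof. by rewrite memW => ->; rewrite !andbF. Qed.

Lemma W_nbhd_u v : v \in W -> e v u -> v = w.
Proof.
rewrite memW => /and3P[vV _ vL] vu; apply/set1P.
by rewrite -nbhd_u !inE vL vV e_sym.
Qed.

Lemma W_nbhd_pendant v l : v \in W -> l \in L -> ~~ e v l.
Proof.
move=> vW lL; apply/negP => vl.
have : v \in nbhd e V l by rewrite inE e_sym vl; move: vW; rewrite memW => /andP[->].
by rewrite nbhd_L // => /set1P vu; move: vW; rewrite vu (negbTE u_notin_W).
Qed.

Lemma Icode_pendant C l : l \in L -> l \notin C -> Icode e V C l = [set u] :&: C.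
Proof.
move=> lL lC; apply/setP => x; rewrite IcodeE !inE.
have -> : (x \in V) && e l x = (x == u) by rewrite -in_set1 -(nbhd_L lL) inE.
by case: eqVneq => [-> | _]; rewrite ?(negbTE lC) ?andbF.
Qed.

Lemma Icode_restrict_pendant D v : v \in W -> v \notin D ->
  (u \in D -> w \in D) -> Icode e V D v = Icode e W (D :&: W) v.
Proof.
move=> vW vD uDw; apply/setP => x; rewrite !IcodeE in_setI.
case xD: (x \in D); last by rewrite !andbF.
rewrite andbT /=; case: eqVneq => [-> | _] /=; first by rewrite vW.
case vx: (e v x); last by rewrite !andbF.
suff -> : (x \in W) = (x \in V) by rewrite andbT andbb.
rewrite memW; case: (x \in V) => //=; apply/andP; split.
  apply: contraTneq xD => xu; rewrite xu; apply: contra vD => /uDw.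
  by rewrite (W_nbhd_u vW) // -xu.
by apply: contraTN vx => /(W_nbhd_pendant vW).
Qed.

Lemma is_DLD_pendant_uncovered C l : is_DLD e V C -> l \in L -> l \notin C ->
  (u \in C) && (w \in C).
Proof.
move=> /is_DLDP[_ _ dom sep] lL lC; have lV := subsetP LV _ lL.
have uC : u \in C.
  have /set0Pn[x] := dom l lV lC.
  by rewrite Icode_pendant // !inE => /andP[/eqP <-].
rewrite uC /=; apply: contraT => wC; case: w_nbhd => wV uw wL.
have lw : l != w by apply: contraNneq wL => <-.
have sub : Icode e V C l \subset Icode e V C w.
  rewrite Icode_pendant //; apply/subsetP => x; rewrite IcodeE !inE.
  by case/andP => /eqP -> ->; rewrite uV e_sym uw orbT.
by move: (sep l w lV wV lC wC lw); rewrite sub.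
Qed.

Lemma card_pendant_uncovered C : is_DLD e V C ->
  #|L :\: C| <= (u \in C) && (w \in C).
Proof.
move=> VC; have [-> | [l /setDP[lL lC]]] := set_0Vmem (L :\: C).
  by rewrite cards0.
rewrite (is_DLD_pendant_uncovered VC lL lC) /= -(cards1 l) subset_leq_card //.
apply/subsetP => l' /setDP[l'L l'C]; rewrite inE; apply: contraT => l'l.
case/is_DLDP: VC => _ _ _ sep.
move: (sep l' l (subsetP LV _ l'L) (subsetP LV _ lL) l'C lC l'l).
by rewrite !Icode_pendant // subxx.
Qed.

Lemma card_pendant_split C : C \subset V ->
  #|C| = #|C :&: W| + (u \in C) + #|L :&: C|.
Proof.
move=> CV; rewrite (cardsD1 u C) -(cardsID L (C :\ u)).
have -> : (C :\ u) :&: L = L :&: C.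
  apply/setP => x; rewrite !inE andbC; case: eqVneq => [-> | _] //=.
  by rewrite (negbTE u_notin_pendant).
have -> : (C :\ u) :\: L = C :&: W.
  apply/setP => x; rewrite in_setI memW !inE.
  case xC: (x \in C); rewrite ?andbF //= (subsetP CV _ xC) /=.
  by case: (x \in L); case: (x == u).
lia.
Qed.

Lemma is_DLD_shrink_pendant C : is_DLD e V C ->
  exists2 D, is_DLD e W D & #|D| + #|L| <= #|C|.
Proof.
move=> VC; set D := if u \in C then w |: C else C.
have VD : is_DLD e V D.
  by rewrite /D; case: ifP => // _; apply: is_DLD_setU1 => //; case: w_nbhd.
have uDw : u \in D -> w \in D by rewrite /D; case: ifP => uC; rewrite ?setU11 ?uC.
exists (D :&: W).
  apply: (@is_DLD_restrict _ _ V) => //; first exact: subsetDl.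
    by apply/set0Pn; exists w; exact: w_in_W.
  by move=> v vW vD; apply: Icode_restrict_pendant.
have card_DW : #|D :&: W| <= #|C :&: W| + (u \in C) && (w \notin C).
  rewrite /D; case: (u \in C); last by rewrite addn0.
  have wW : [set w] \subset W by rewrite sub1set w_in_W.
  by rewrite setIUl (setIidPl wW) cardsU1 in_setI w_in_W andbT addnC.
have CV : C \subset V by case/is_DLDP: VC.
have := card_pendant_split CV; have := cardsID C L.
have := card_pendant_uncovered VC; move: card_DW.
by case: (u \in C); case: (w \in C) => /=; lia.
Qed.

Lemma is_DLD_extend_pendant C' X z : is_DLD e W C' -> X \subset u |: L ->
  (u |: L) :\: X = [set z] -> (u \in X -> w \in C') ->
  Icode e V (C' :|: X) z != set0 ->
  {in W, forall v, v \notin C' ->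
     ~~ (Icode e V (C' :|: X) z \subset Icode e W C' v) &&
     ~~ (Icode e W C' v \subset Icode e V (C' :|: X) z)} ->
  is_DLD e V (C' :|: X).
Proof.
move=> WC' Xsub Xz uXw z0 zsep; have C'W : C' \subset W by case/is_DLDP: WC'.
have notinX v : v \in W -> v \notin X.
  move=> vW; apply: contraL vW => /(subsetP Xsub)/setU1P[-> | /pendant_notin_W //].
  exact: u_notin_W.
have CW : (C' :|: X) :&: W = C'.
  apply/setP => x; rewrite in_setI in_setU.
  case xC': (x \in C'); first by rewrite (subsetP C'W).
  by case xW: (x \in W); rewrite ?andbF // (negbTE (notinX x xW)).
apply: (@is_DLD_extend _ _ V W C' (C' :|: X) z WC') => //.
- exact: subsetUl.
- rewrite subUset (subset_trans C'W (subsetDl _ _)) /=.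
  by apply: subset_trans Xsub _; rewrite subUset sub1set uV LV.
- move=> x /setDP[xV]; rewrite in_setU negb_or => /andP[xC' xX].
  rewrite in_setU1 in_setD xC' /= orbC; case: (boolP (x \in W)) => //= xW.
  rewrite -in_set1 -Xz !inE xX /=.
  by move: xW; rewrite memW xV /= negb_and !negbK.
- move=> v vW vC'; rewrite (Icode_restrict_pendant vW) ?CW //.
    by rewrite in_setU negb_or vC' notinX.
  by rewrite !in_setU => /orP[/(subsetP C'W) | /uXw ->]; rewrite ?(negbTE u_notin_W).
Qed.

Lemma is_DLD_grow_pendant C' : L != set0 -> is_DLD e W C' ->
  exists2 C, is_DLD e V C & #|C| <= #|C'| + #|L|.
Proof.
move=> /set0Pn[l lL] WC'; case/is_DLDP: (WC') => _ C'W dom _.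
have IcodeW v : Icode e W C' v \subset W := subset_trans (Icode_sub _ _ _ _) C'W.
have lu : l != u by apply: contraTneq lL => ->; exact: u_notin_pendant.
case: (boolP (w \in C')) => wC'.
- exists (C' :|: (u |: (L :\ l))).
    have Il : Icode e V (C' :|: (u |: (L :\ l))) l = [set u].
      rewrite Icode_pendant //; last first.
        apply/negP; rewrite !inE eqxx (negbTE lu) /= orbF => /(subsetP C'W).
        exact/negP/pendant_notin_W.
      by apply/setIidPl; rewrite sub1set !inE eqxx orbT.
    apply: (is_DLD_extend_pendant (z := l)) => //.
    + by apply: setUS; apply: subsetDl.
    + apply/setP => x; rewrite !inE.
      by case: (eqVneq x l) => [-> | _] /=; rewrite ?(negbTE lu) ?lL ?andNb.
    + by rewrite Il; apply/set0Pn; exists u; rewrite set11.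
    + move=> v vW vC'; rewrite Il sub1set; apply/andP; split.
        by apply: contraNN u_notin_W => /(subsetP (IcodeW v)).
      apply/negP => /subsetP sub; have /set0Pn[x xv] := dom v vW vC'.
      have := subsetP (IcodeW v) x xv; move/set1P: (sub x xv) => ->.
      by rewrite (negbTE u_notin_W).
  apply: leq_trans (leq_card_setU _ _) _; rewrite leq_add2l cardsU1 (cardsD1 l L) lL.
  by rewrite leq_add2r leq_b1.
- exists (C' :|: L).
    have lIu : l \in Icode e V (C' :|: L) u.
      by rewrite IcodeE in_setU lL (subsetP LV _ lL) pendant_adj // !orbT.
    apply: (is_DLD_extend_pendant (z := u)) => //.
    + exact: subsetUr.
    + apply/setP => x; rewrite !inE.
      case: (eqVneq x u) => [-> | xu]; first by rewrite (negbTE u_notin_pendant).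
      by rewrite orFb andNb.
    + by rewrite (negbTE u_notin_pendant).
    + by apply/set0Pn; exists l.
    + move=> v vW vC'; apply/andP; split.
        apply/negP => /subsetP/(_ l lIu)/(subsetP (IcodeW v)).
        by rewrite (negbTE (pendant_notin_W lL)).
      apply/negP => /subsetP sub; have /set0Pn[x xv] := dom v vW vC'.
      have xW := subsetP (IcodeW v) x xv.
      have xC' : x \in C' := subsetP (Icode_sub e W C' v) x xv.
      move: (sub x xv); rewrite IcodeE => /andP[/orP[/eqP xu | /andP[_ ux]] _].
        by move: xW; rewrite xu (negbTE u_notin_W).
      by move: wC'; rewrite -(W_nbhd_u xW) ?xC' // e_sym.
  exact: leq_card_setU.
Qed.

Lemma gammaDLD_pendant : L != set0 -> gammaDLD e W + #|L| = gammaDLD e V.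
Proof.
move=> L0; apply: gammaDLD_shift.
- by apply/set0Pn; exists u.
- by apply/set0Pn; exists w; exact: w_in_W.
- exact: is_DLD_shrink_pendant.
- by move=> C'; exact: is_DLD_grow_pendant.
Qed.

End PendantLeaves.

Lemma leaves_at_sub (T : finType) (e : rel T) (V : {set T}) u :
  leaves_at e V u \subset V.
Proof. by apply/subsetP => l; rewrite !inE => /andP[/andP[]]. Qed.

Lemma nbhd_leaves_at (T : finType) (e : rel T) (V : {set T}) u :
  symmetric e -> u \in V -> {in leaves_at e V u, forall l, nbhd e V l = [set u]}.
Proof.
move=> e_sym uV l; rewrite !inE => /andP[/andP[_ ul] /andP[_ /cards1P[z nz]]].
by rewrite nz; congr [set _]; apply/esym/set1P; rewrite -nz inE uV e_sym.
Qed.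

Theorem mainTheorem12 (T : finType) (e : rel T)
  (e_sym : symmetric e) (e_irr : irreflexive e)
  (V : {set T}) (u : T) :
  is_tree e V ->
  is_support e V u ->
  #|nbhd e V u :\: leaves_at e V u| = 1 ->
  gammaDLD e (V :\: (u |: leaves_at e V u)) + #|leaves_at e V u| = gammaDLD e V.
Proof.
move=> _ /andP[uV L0] /eqP/cards1P[w nbhd_u].
exact: (gammaDLD_pendant e_sym e_irr uV (leaves_at_sub e V u)
                         (nbhd_leaves_at e_sym uV) nbhd_u L0).
Qed.
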